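(* Assume that $f$ obeys $RC(\alpha,\beta,\epsilon)$ for all $\mathbf{z} \in E(\epsilon)$. Furthermore, suppose $\mathbf{z}_0 \in E(\epsilon)$, and assume $0<\mu\le {2}/{\beta}$. Consider the following update \[ \mathbf{z}_{\tau+1}=\mathbf{z}_\tau-\mu\nabla f(\mathbf{z}_\tau). \] Then for all $\tau$ we have $\mathbf{z}_\tau\in E(\epsilon)$ and \begin{align*} \text{dist}^2(\mathbf{z}_\tau,\mathbf{x})\le \left(1-\frac{2\mu}{\alpha}\right)^\tau \text{dist}^2(\mathbf{z}_0,\mathbf{x}). \end{align*}
   Context: $f:\mathbb{C}^n\to\mathbb{R}$ (in the paper, $f(\mathbf{z})=\frac{1}{2m}\sum_r(y_r-|\mathbf{a}_r^*\mathbf{z}|^2)^2$) with Wirtinger gradient $\nabla f(\mathbf{z})=(\partial f/\partial\mathbf{z})^*$. $\mathbf{x}\in\mathbb{C}^n$ is a planted solution, $P=\{\mathbf{x}e^{i\phi}:\phi\in[0,2\pi]\}$, $E(\epsilon)=\{\mathbf{z}\in\mathbb{C}^n:\text{dist}(\mathbf{z},P)\le\epsilon\}$, $\phi(\mathbf{z})=\arg\min_{\phi\in[0,2\pi]}\|\mathbf{z}-e^{i\phi}\mathbf{x}\|_2$ and $\text{dist}(\mathbf{z},\mathbf{x})=\|\mathbf{z}-e^{i\phi(\mathbf{z})}\mathbf{x}\|_2$. Regularity condition $RC(\alpha,\beta,\epsilon)$: for all $\mathbf{z}\in E(\epsilon)$, $\operatorname{Re}\left(\langle \nabla f(\mathbf{z}),\mathbf{z}-\mathbf{x}e^{i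 \phi(\mathbf{z})}\rangle\right) \ge \frac{1}{\alpha}\text{dist}^2(\mathbf{z},\mathbf{x})+\frac{1}{\beta}\|\nabla f(\mathbf{z})\|_2^2$. *)

From mathcomp Require Import all_boot all_order all_algebra.
From mathcomp Require Import all_classical all_reals all_analysis.
From mathcomp Require Export complex.
Import Order.TTheory GRing.Theory Num.Theory ComplexField.

Set Implicit Arguments.
Unset Strict Implicit.
Unset Printing Implicit Defensive.

Local Open Scope ring_scope.
Local Open Scope complex_scope.
Local Open Scope classical_set_scope.

Section PhaseRetrieval.
Variables (R : realType) (n : nat).

Definition cinner (u v : 'cV[R[i]]_n) : R[i] :=
  \sum_(i < n) ((u i ord0)^*)%C * v i ord0.

Definition cnorm (v : 'cV[R[i]]_n) : R :=
  Num.sqrt (\sum_(i < n)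
    (complex.Re (v i ord0) ^+ 2 + complex.Im (v i ord0) ^+ 2)).

Definition expi (phi : R) : R[i] := (cos phi +i* sin phi)%C.

Definition phase_orbit (x : 'cV[R[i]]_n) : set 'cV[R[i]]_n :=
  [set expi phi *: x | phi in `[0, 2 * pi]%classic].

Definition dist_to_orbit (z x : 'cV[R[i]]_n) : R :=
  inf [set cnorm (z - p) | p in phase_orbit x].

Definition cdist (z x : 'cV[R[i]]_n) : R :=
  inf [set cnorm (z - expi phi *: x) | phi in `[0, 2 * pi]%classic].

Definition Eball (x : 'cV[R[i]]_n) (eps : R) : set 'cV[R[i]]_n :=
  [set z | dist_to_orbit z x <= eps].

Definition is_phase_argmin (z x : 'cV[R[i]]_n) (phi : R) : Prop :=
  (0 <= phi <= 2 * pi) /\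
  forall psi, 0 <= psi <= 2 * pi ->
    cnorm (z - expi phi *: x) <= cnorm (z - expi psi *: x).

Definition RC (x : 'cV[R[i]]_n) (grad : 'cV[R[i]]_n -> 'cV[R[i]]_n)
    (alpha beta eps : R) : Prop :=
  forall z, Eball x eps z ->
    exists phi, is_phase_argmin z x phi /\
      complex.Re (cinner (grad z) (z - expi phi *: x))
        >= (cdist z x) ^+ 2 / alpha + (cnorm (grad z)) ^+ 2 / beta.

End PhaseRetrieval.

(* Let h = z - e^{i phi(z)} x and g = grad z.  Since e^{i phi(z)} x is still a
   candidate phase for the next iterate, dist^2(z - mu g, x) <= ||h - mu g||^2
   = ||h||^2 - 2 mu Re<g, h> + mu^2 ||g||^2, and the regularity condition bounds
   this by (1 - 2 mu/alpha) ||h||^2 + mu (mu - 2/beta) ||g||^2, whose last term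
   is nonpositive.  The distance therefore never increases, so the iterates stay
   in E(eps) and the regularity condition applies at every step. *)
From mathcomp Require Import all_boot all_order all_algebra.
From mathcomp Require Import all_classical all_reals all_analysis.
From mathcomp Require Import complex.
From mathcomp Require Import ring lra.
Import Order.TTheory GRing.Theory Num.Theory ComplexField.
Local Open Scope ring_scope.
Local Open Scope complex_scope.

Lemma descent_bound (R : realFieldType) (alpha beta mu d2 g2 re : R) :
  0 <= mu -> mu <= 2 / beta -> 0 <= g2 -> d2 / alpha + g2 / beta <= re ->
  d2 - 2 * mu * re + mu ^+ 2 * g2 <= (1 - 2 * mu / alpha) * d2.
Proof.
move=> mu_ge0 mu_le g2_ge0 hre.
have step_term : mu * g2 * mu <= mu * g2 * (2 / beta).
  by apply: ler_wpM2l => //; apply: mulr_ge0.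
have rc_term : 2 * mu * (d2 / alpha + g2 / beta) <= 2 * mu * re.
  by apply: ler_wpM2l => //; apply: mulr_ge0.
have -> : (1 - 2 * mu / alpha) * d2 = d2 - 2 * mu * (d2 / alpha) by ring.
have e1 : mu * g2 * (2 / beta) = 2 * mu * (g2 / beta) by ring.
have e2 : mu * g2 * mu = mu ^+ 2 * g2 by ring.
move: rc_term; rewrite mulrDr; lra.
Qed.

Lemma geometric_decay {R : realDomainType} (c : R) (u : nat -> R) :
  (forall t, 0 <= u t) -> (forall t, u t.+1 <= c * u t) ->
  forall t, u t <= c ^+ t * u 0%N.
Proof.
move=> u_ge0 u_step; have [c_ge0 | c_lt0] := leP 0 c.
  elim=> [|t IH]; first by rewrite expr0 mul1r.
  by rewrite (le_trans (u_step t)) // exprS -mulrA ler_wpM2l.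
have u0_eq0 : u 0%N = 0.
  by have := u_step 0%N; have := u_ge0 1%N; have := u_ge0 0%N; nra.
case=> [|t]; rewrite u0_eq0 mulr0 //.
by have := u_step t; have := u_ge0 t; nra.
Qed.

Section PhaseDistance.
Context {R : realType} {n : nat}.
Implicit Types (x z h g : 'cV[R[i]]_n).

Lemma cnorm_ge0 h : 0 <= cnorm h.
Proof. exact: sqrtr_ge0. Qed.

Lemma cnorm_sqrE h : cnorm h ^+ 2 =
  \sum_(i < n) (complex.Re (h i ord0) ^+ 2 + complex.Im (h i ord0) ^+ 2).
Proof. by rewrite sqr_sqrtr // sumr_ge0 // => i _; rewrite addr_ge0 ?sqr_ge0. Qed.

Lemma cnorm_sqrB_scale h g (mu : R) :
  cnorm (h - mu%:C *: g) ^+ 2 =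
  cnorm h ^+ 2 - 2 * mu * complex.Re (cinner g h) + mu ^+ 2 * cnorm g ^+ 2.
Proof.
rewrite !cnorm_sqrE /cinner raddf_sum !mulr_sumr -sumrB -big_split /=.
apply: eq_bigr => i _; rewrite !mxE.
by case: (h i ord0) => a b; case: (g i ord0) => c d /=; ring.
Qed.

Lemma cdist_le z x phi :
  0 <= phi <= 2 * pi -> cdist z x <= cnorm (z - expi phi *: x).
Proof.
move=> phi_itv; apply: ge_inf; last by exists phi; rewrite //= in_itv.
by exists 0 => _ [psi _ <-]; apply: cnorm_ge0.
Qed.

Lemma cdist_ge0 z x : 0 <= cdist z x.
Proof.
apply: lb_le_inf; last by move=> _ [psi _ <-]; apply: cnorm_ge0.
exists (cnorm (z - expi 0 *: x)); exists 0 => //.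
by rewrite /= in_itv /= lexx mulr_ge0 ?pi_ge0.
Qed.

Lemma cdist_argmin {z x phi} :
  is_phase_argmin z x phi -> cdist z x = cnorm (z - expi phi *: x).
Proof.
move=> [phi_itv phi_min]; apply/eqP; rewrite eq_le cdist_le //=.
apply: lb_le_inf.
  by exists (cnorm (z - expi phi *: x)); exists phi; rewrite //= in_itv.
by move=> y [psi]; rewrite /= in_itv /= => psi_itv <-; apply: phi_min.
Qed.

Lemma dist_to_orbitE z x : dist_to_orbit z x = cdist z x.
Proof. by rewrite /dist_to_orbit /phase_orbit image_comp. Qed.

Context {x : 'cV[R[i]]_n} {grad : 'cV[R[i]]_n -> 'cV[R[i]]_n}.
Context {alpha beta eps mu : R}.
Hypothesis rc : RC x grad alpha beta eps.
Hypothesis mu_gt0 : 0 < mu.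
Hypothesis mu_le : mu <= 2 / beta.

Lemma RC_gradient_step {z} : Eball x eps z ->
  cdist (z - mu%:C *: grad z) x ^+ 2 <= (1 - 2 * mu / alpha) * cdist z x ^+ 2.
Proof.
move=> /rc [phi [phi_min hre]].
have phi_itv : 0 <= phi <= 2 * pi by case: phi_min.
have next_le : cdist (z - mu%:C *: grad z) x
    <= cnorm (z - expi phi *: x - mu%:C *: grad z).
  by rewrite addrAC; apply: cdist_le.
apply: (le_trans (_ : _ <= cnorm (z - expi phi *: x - mu%:C *: grad z) ^+ 2)).
  by rewrite lerXn2r ?nnegrE ?cdist_ge0 ?cnorm_ge0.
rewrite cnorm_sqrB_scale -(cdist_argmin phi_min).
by apply: descent_bound mu_le _ hre; rewrite ?sqr_ge0 ?ltW.
Qed.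

Hypothesis alpha_gt0 : 0 < alpha.

Lemma cdist_gradient_step_le {z} : Eball x eps z ->
  cdist (z - mu%:C *: grad z) x <= cdist z x.
Proof.
move=> /RC_gradient_step step.
rewrite -(ler_pXn2r (_ : 0 < 2)%N) ?nnegrE ?cdist_ge0 // (le_trans step) //.
by rewrite ler_piMl ?sqr_ge0 // gerBl divr_ge0 ?mulr_ge0 ?ltW.
Qed.

Lemma Eball_gradient_step {z} : Eball x eps z -> Eball x eps (z - mu%:C *: grad z).
Proof.
move=> z_in; rewrite /Eball /= dist_to_orbitE.
by rewrite (le_trans (cdist_gradient_step_le z_in)) // -dist_to_orbitE.
Qed.

End PhaseDistance.

Theorem lemma7p10 (R : realType) (n : nat) (x : 'cV[R[i]]_n)
    (grad : 'cV[R[i]]_n -> 'cV[R[i]]_n) (alpha beta eps mu : R)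
    (z : nat -> 'cV[R[i]]_n) :
  0 < alpha ->
  RC x grad alpha beta eps ->
  Eball x eps (z 0%N) ->
  0 < mu -> mu <= 2 / beta ->
  (forall t : nat, z t.+1 = z t - (mu%:C)%C *: grad (z t)) ->
  forall t : nat,
    Eball x eps (z t) /\
    (cdist (z t) x) ^+ 2 <= (1 - 2 * mu / alpha) ^+ t * (cdist (z 0%N) x) ^+ 2.
Proof.
move=> alpha_gt0 rc z0_in mu_gt0 mu_le z_next.
have z_in t : Eball x eps (z t).
  elim: t => [//|t IH]; rewrite z_next.
  exact: (Eball_gradient_step rc mu_gt0 mu_le alpha_gt0 IH).
move=> t; split; first exact: z_in.
have dist_step s : cdist (z s.+1) x ^+ 2 <= (1 - 2 * mu / alpha) * cdist (z s) x ^+ 2.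
  by rewrite z_next; exact: (RC_gradient_step rc mu_gt0 mu_le (z_in s)).
exact: (geometric_decay (1 - 2 * mu / alpha) (fun s => cdist (z s) x ^+ 2)
  (fun s => sqr_ge0 _) dist_step t).
Qed.
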